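(* Let $C$ be a set of colours and $W_2=\{w_0w_1w_2\cdots\in C^\omega:\ w_i\neq w_{i+1}\text{ for all } i\}$. Then $W_2$ does not have ($\varepsilon$-free) chromatic memory $<|C|$; consequently $W_2$ does not have $\varepsilon$-chromatic memory $<|C|$ either.
   Context: A $C$-game is $(G,V_{\mathrm{Eve}},v_0,W)$ with $G$ a $C$-graph (vertices with coloured directed edges $v\xrightarrow{c}v'$, every vertex having an outgoing edge). A strategy is $(S,\pi,s_0)$ with $S$ a $C$-graph, $\pi:S\to G$ an edge- and colour-preserving map, $\pi(s_0)=v_0$, such that for all $v\notin V_{\mathrm{Eve}}$, $v\xrightarrow{c}v'\in E(G)$, $s\in\pi^{-1}(v)$ there is $s'\in\pi^{-1}(v')$ with $s\xrightarrow{c}s'$; it is winning if all infinite paths from $s_0$ have colour sequence in $W$. A product strategy over $M$ has $V(S)\subseteq V(G)\times M$ and $\pi(v,m)=v$; it is chromatic if there is $\delta:M\times C\to M$ with $m'=\delta(m,c)$ for each edge $(v,m)\xrightarrow{c}(v',m')$ of $S$. $W$ has chromatic memory $<\nu$ if every game with objective $W$ having a winning strategy has a winning chromatic product strategy with $|\pi^{-1}(v)|<\nu$ for all $v$. With a fresh colour $\varepsilon$ and $C^\varepsilon=C\sqcup\{\varepsilon\}$, $W^\varepsilon$ is the set of $w\in(C^\varepsilon)^\omega$ whose $\varepsilon$-free projection is infinite and in $W$ or finite with a continuation in $W$; $W$ has $\varepsilon$-chromatic memory $<\nu$ if every $C^\varepsilon$-game with objective $W^\varepsilon$ having a winning strategy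 has a winning chromatic product strategy over some $M$ with $|M|<\nu$ whose update function satisfies $\delta(m,\varepsilon)=m$. *)

From mathcomp Require Import all_boot.
Set Implicit Arguments. Unset Strict Implicit. Unset Printing Implicit Defensive.

Definition card_le (A B : Type) : Prop := exists f : A -> B, injective f.
Definition card_lt (A B : Type) : Prop := card_le A B /\ ~ card_le B A.

Definition objective (C : Type) := (nat -> C) -> Prop.

Definition is_cgraph (C V : Type) (E : V -> C -> V -> Prop) : Prop :=
  forall v, exists c v', E v c v'.

Definition is_strategy (C V : Type) (E : V -> C -> V -> Prop) (VEve : V -> Prop)
  (v0 : V) (S : Type) (ES : S -> C -> S -> Prop) (pi : S -> V) (s0 : S) : Prop :=
  [/\ is_cgraph ES,
      (forall s c s', ES s c s' -> E (pi s) c (pi s')),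
      pi s0 = v0 &
      (forall v c v' s, ~ VEve v -> E v c v' -> pi s = v ->
          exists s', pi s' = v' /\ ES s c s')].

Definition winning_from (C S : Type) (ES : S -> C -> S -> Prop) (s0 : S)
  (W : objective C) : Prop :=
  forall (s : nat -> S) (w : nat -> C), s 0 = s0 ->
    (forall i, ES (s i) (w i) (s i.+1)) -> W w.

Definition has_winning_strategy (C V : Type) (E : V -> C -> V -> Prop)
  (VEve : V -> Prop) (v0 : V) (W : objective C) : Prop :=
  exists (S : Type) (ES : S -> C -> S -> Prop) (pi : S -> V) (s0 : S),
    is_strategy E VEve v0 ES pi s0 /\ winning_from ES s0 W.

(** Product strategies over M: the vertex set is a subset P of V * M
    (realised as the subtype [sig P]) and pi is the first projection. *)
Definition prod_pi (V M : Type) (P : V * M -> Prop) (s : sig P) : V := (proj1_sig s).1.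

Definition is_chromatic (C V M : Type) (P : V * M -> Prop)
  (ES : sig P -> C -> sig P -> Prop) (delta : M -> C -> M) : Prop :=
  forall s c s', ES s c s' -> (proj1_sig s').2 = delta (proj1_sig s).2 c.

(** W has chromatic memory < |D| (the cardinal nu is given as |D|). *)
Definition has_chromatic_memory_lt (C : Type) (W : objective C) (D : Type) : Prop :=
  forall (V : Type) (E : V -> C -> V -> Prop) (VEve : V -> Prop) (v0 : V),
    is_cgraph E -> has_winning_strategy E VEve v0 W ->
    exists (M : Type) (P : V * M -> Prop) (ES : sig P -> C -> sig P -> Prop)
           (s0 : sig P) (delta : M -> C -> M),
      [/\ is_strategy E VEve v0 ES (@prod_pi V M P) s0,
          winning_from ES s0 W,
          is_chromatic ES delta &
          forall v : V, card_lt {s : sig P | prod_pi s = v} D].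

(** The fresh colour epsilon: C^eps = option C, with None = epsilon. *)

(** If w has infinitely many non-epsilon letters this says
    u is the epsilon-free projection of w; otherwise it says u is a
    continuation of the (finite) projection. *)
Definition proj_prefix (C : Type) (w : nat -> option C) (u : nat -> C) : Prop :=
  forall n, let p := pmap id (map w (iota 0 n)) in p = map u (iota 0 (size p)).

Definition W_eps (C : Type) (W : objective C) : objective (option C) :=
  fun w =>
    ((forall n, exists i, n <= i /\ w i <> None) /\
       exists u, proj_prefix w u /\ W u)
    \/
    ((exists n, forall i, n <= i -> w i = None) /\
       exists u, proj_prefix w u /\ W u).

Definition has_eps_chromatic_memory_lt (C : Type) (W : objective C) (D : Type) : Prop :=
  forall (V : Type) (E : V -> option C -> V -> Prop) (VEve : V -> Prop) (v0 : V),
    is_cgraph E -> has_winning_strategy E VEve v0 (W_eps W) ->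
    exists (M : Type) (P : V * M -> Prop)
           (ES : sig P -> option C -> sig P -> Prop)
           (s0 : sig P) (delta : M -> option C -> M),
      [/\ is_strategy E VEve v0 ES (@prod_pi V M P) s0,
          winning_from ES s0 (W_eps W),
          is_chromatic ES delta,
          (forall m, delta m None = m) &
          card_lt M D].

Definition W2 (C : Type) : objective C := fun w => forall i, w i <> w i.+1.

(** Consider the arena in which Adam first plays an arbitrary colour [c]
    while moving to a vertex labelled by two distinct colours [x, y]; Eve must
    then play [x] or [y], after which Adam keeps playing colours different
    from the previous one.  Eve wins [W2] by remembering [c] and answering
    with whichever of [x, y] differs from it.  With chromatic memory, however,
    if two first colours [c <> c'] led to the same memory state, Adam could
    play either of them towards the vertex [{c, c'}], reach the same state of
    the strategy, and Eve's answer would repeat one of them.  So the memory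
    reached after the first move determines [c], which yields [|C|] distinct
    memory states over one vertex. *)

From mathcomp Require Import all_boot.
From Stdlib Require Import Classical ClassicalEpsilon ProofIrrelevance FunctionalExtensionality.

Set Implicit Arguments. Unset Strict Implicit. Unset Printing Implicit Defensive.

Lemma exists_infinite_path (S K : Type) (ES : S -> K -> S -> Prop) :
  is_cgraph ES -> forall x : S,
  exists (s : nat -> S) (w : nat -> K), s 0 = x /\ forall i, ES (s i) (w i) (s i.+1).
Proof.
move=> cgraph_ES x.
have step (y : S) : {p : K * S | ES y p.1 p.2}.
  apply: constructive_indefinite_description.
  by have [k [y' e]] := cgraph_ES y; exists (k, y').
pose s n := iter n (fun y => (sval (step y)).2) x.
by exists s, (fun i => (sval (step (s i))).1); split => // i; exact: svalP (step (s i)).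
Qed.

Lemma winning_from_two_edges (S K : Type) (ES : S -> K -> S -> Prop) W x y z k k' :
  is_cgraph ES -> winning_from ES x W -> ES x k y -> ES y k' z ->
  exists w, [/\ w 0 = k, w 1 = k' & W w].
Proof.
move=> cgraph_ES win exy eyz.
have [s [w [s0z path_sw]]] := exists_infinite_path cgraph_ES z.
exists (fun i => match i with 0 => k | 1 => k' | n.+2 => w n end); split => //.
apply: (win (fun i => match i with 0 => x | 1 => y | n.+2 => s n end)) => // - [|[|n]] //.
by rewrite /= s0z.
Qed.

Lemma prod_state_eq (V M : Type) (P : V * M -> Prop) (s s' : sig P) :
  prod_pi s = prod_pi s' -> (sval s).2 = (sval s').2 -> s = s'.
Proof.
rewrite /prod_pi => eq_v eq_m.
apply: eq_sig_hprop => [? ? ?|]; first exact: proof_irrelevance.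
by rewrite [sval s]surjective_pairing [sval s']surjective_pairing eq_v eq_m.
Qed.

Lemma other_colour (C : Type) (a b : C) : a <> b -> forall e : C, exists f, f <> e.
Proof.
move=> neq_ab e; case: (classic (e = a)) => [->|neq_ea]; [exists b | exists a]; exact: nesym.
Qed.

Inductive vertex (C : Type) := VStart | VChoice of C & C | VLast of C.
Arguments VStart {C}.

Definition eve_vertex (C : Type) (v : vertex C) : Prop :=
  if v is VChoice _ _ then True else False.

Inductive state (C : Type) := SStart | SChoice of C & C & C | SLast of C.
Arguments SStart {C}.

Definition state_vertex (C : Type) (s : state C) : vertex C :=
  match s with SStart => VStart | SChoice _ x y => VChoice x y | SLast d => VLast d end.

Section Arena.

Variables (C K : Type) (col : C -> K) (a b : C).
Hypothesis neq_ab : a <> b.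

(* The disjunct [x = y] only concerns the unreachable vertices [VChoice x x];
   it gives them outgoing edges. *)
Definition arena_edge (v : vertex C) (k : K) (v' : vertex C) : Prop :=
  match v, v' with
  | VStart, VChoice x y => x <> y /\ exists c, k = col c
  | VChoice x y, VLast d => k = col d /\ [\/ d = x, d = y | x = y]
  | VLast e, VLast f => k = col f /\ f <> e
  | _, _ => False
  end.

(* [SChoice c x y] remembers the first colour [c]. *)
Definition strategy_edge (s : state C) (k : K) (s' : state C) : Prop :=
  match s, s' with
  | SStart, SChoice c x y => x <> y /\ k = col c
  | SChoice c x y, SLast d => [/\ k = col d, d <> c & [\/ d = x, d = y | x = y]]
  | SLast e, SLast f => k = col f /\ f <> e
  | _, _ => False
  end.

Definition state_colour (s : state C) : C :=
  match s with SStart => a | SChoice c _ _ => c | SLast d => d end.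

Lemma arena_cgraph : is_cgraph arena_edge.
Proof.
case=> [|x y|e].
- by exists (col a), (VChoice a b); split; [|exists a].
- by exists (col x), (VLast x); split; [|constructor 1].
- by have [f neq_fe] := other_colour neq_ab e; exists (col f), (VLast f).
Qed.

Lemma strategy_edge_colour s k s' : strategy_edge s k s' -> k = col (state_colour s').
Proof. by case: s s' => [|c x y|e] [|c' x' y'|e'] //= => [[]|[]|[]]. Qed.

Lemma strategy_colour_changes s s' s'' k k' :
  strategy_edge s k s' -> strategy_edge s' k' s'' ->
  state_colour s' <> state_colour s''.
Proof.
case: s s' s'' => [|c x y|e] [|c' x' y'|e'] [|c'' x'' y''|e''] //= _;
  by case=> _ /nesym.
Qed.

Lemma strategy_edge_is_strategy :
  is_strategy arena_edge (@eve_vertex C) VStart strategy_edge (@state_vertex C) SStart.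
Proof.
split=> //.
- case=> [|c x y|e].
  + by exists (col a), (SChoice a a b).
  + have [->|neq_xy] := classic (x = y).
      have [d neq_dc] := other_colour neq_ab c.
      by exists (col d), (SLast d); split => //; constructor 3.
    have [eq_xc|neq_xc] := classic (x = c).
      exists (col y), (SLast y); split => //; last by constructor 2.
      by move=> eq_yc; apply: neq_xy; rewrite eq_xc eq_yc.
    by exists (col x), (SLast x); split => //; constructor 1.
  + by have [f neq_fe] := other_colour neq_ab e; exists (col f), (SLast f).
- by move=> [|c x y|e] k [|c' x' y'|e'] //= => [[? ->]|[-> _]]; split => //; exists c'.
- move=> v k v' s not_eve e_v s_v; subst v.
  case: s not_eve e_v => [|c x y|e] /= not_eve; [|by case: not_eve|]; case: v' => //=.
  + by move=> x y [neq_xy [c ->]]; exists (SChoice c x y).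
  + by move=> f [-> neq_fe]; exists (SLast f).
Qed.

Variable W : objective K.
Hypothesis W_of_W2 : forall u : nat -> C, W2 u -> W (col \o u).
Hypothesis W_no_initial_repeat : forall w c, w 0 = col c -> w 1 = col c -> ~ W w.

Lemma arena_has_winning_strategy :
  has_winning_strategy arena_edge (@eve_vertex C) VStart W.
Proof.
exists (state C), strategy_edge, (@state_vertex C), SStart.
split; first exact: strategy_edge_is_strategy.
move=> s w _ path_sw.
have -> : w = col \o (fun i => state_colour (s i.+1)).
  by apply: functional_extensionality => i; apply: strategy_edge_colour (path_sw i).
by apply: W_of_W2 => i; apply: strategy_colour_changes (path_sw i) (path_sw i.+1).
Qed.

Variables (M : Type) (P : vertex C * M -> Prop) (ES : sig P -> K -> sig P -> Prop).
Variables (s0 : sig P) (delta : M -> K -> M).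
Hypothesis ES_strategy : is_strategy arena_edge (@eve_vertex C) VStart ES (@prod_pi _ M P) s0.
Hypothesis ES_winning : winning_from ES s0 W.
Hypothesis ES_chromatic : is_chromatic ES delta.

Lemma first_move x y c : x <> y ->
  exists2 t, prod_pi t = VChoice x y & ES s0 (col c) t.
Proof.
case: ES_strategy => _ _ s0_start adam neq_xy.
have [|t [? ?]] := adam VStart (col c) (VChoice x y) s0 id _ s0_start; last by exists t.
by split; last exists c.
Qed.

Lemma first_memory_injective : injective (fun c => delta (sval s0).2 (col c)).
Proof.
move=> c c' eq_mem; apply: NNPP => neq_cc'.
have [t t_v e0t] := first_move c neq_cc'.
have [t' t'_v e0t'] := first_move c' neq_cc'.
have eq_tt' : t = t'.
  by apply: prod_state_eq; rewrite ?t_v ?t'_v // (ES_chromatic e0t) (ES_chromatic e0t').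
case: ES_strategy => cgraph_ES arena_ES _ _.
have [k [t'' ett'']] := cgraph_ES t.
move: (arena_ES _ _ _ ett''); rewrite t_v.
case: (prod_pi t'') => // d [eq_k [eq_d|eq_d|//]].
- rewrite eq_k eq_d in ett''.
  have [w [w0 w1 Ww]] := winning_from_two_edges cgraph_ES ES_winning e0t ett''.
  exact: W_no_initial_repeat w0 w1 Ww.
- rewrite eq_k eq_d eq_tt' in ett''.
  have [w [w0 w1 Ww]] := winning_from_two_edges cgraph_ES ES_winning e0t' ett''.
  exact: W_no_initial_repeat w0 w1 Ww.
Qed.

Lemma memory_card_ge : card_le C M.
Proof. by exists (fun c => delta (sval s0).2 (col c)); apply: first_memory_injective. Qed.

Lemma states_over_choice_card_ge : card_le C {s : sig P | prod_pi s = VChoice a b}.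
Proof.
have next (c : C) : {t : {s : sig P | prod_pi s = VChoice a b} | ES s0 (col c) (sval t)}.
  apply: constructive_indefinite_description.
  by have [t t_v e0t] := first_move c neq_ab; exists (exist _ t t_v).
exists (fun c => sval (next c)) => c c' eq_next.
apply: first_memory_injective => /=.
by rewrite -(ES_chromatic (svalP (next c))) -(ES_chromatic (svalP (next c'))) eq_next.
Qed.

End Arena.

Lemma card_le_not_lt (A B : Type) : card_le A B -> ~ card_lt B A.
Proof. by move=> le_AB []. Qed.

Lemma W_eps_Some (C : Type) (W : objective C) (u : nat -> C) :
  W u -> W_eps W (fun i => Some (u i)).
Proof.
move=> Wu; left; split; first by move=> n; exists n.
exists u; split=> // n /=.
by rewrite (map_comp Some u) (@map_pK _ _ id Some) // size_map size_iota.
Qed.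

Lemma W_eps_W2_no_initial_repeat (C : Type) (w : nat -> option C) (c : C) :
  w 0 = Some c -> w 1 = Some c -> ~ W_eps (@W2 C) w.
Proof.
move=> w0 w1 W_w.
have [u [prefix_wu W2u]] : exists u, proj_prefix w u /\ W2 u by case: W_w => -[].
by move: (prefix_wu 2); rewrite /= w0 w1 => -[u0 u1]; apply: (W2u 0); rewrite -u0 -u1.
Qed.

Lemma W2_not_chromatic_memory_lt (C : Type) (a b : C) :
  a <> b -> ~ has_chromatic_memory_lt (@W2 C) C.
Proof.
move=> neq_ab mem.
have W2_no_repeat (w : nat -> C) c : w 0 = c -> w 1 = c -> ~ W2 w.
  by move=> w0 w1 /(_ 0); rewrite w0 w1.
have [M [P [ES [s0 [delta [strat win chrom card]]]]]] :=
  mem _ _ _ _ (arena_cgraph id neq_ab) (arena_has_winning_strategy neq_ab (fun _ => id)).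
exact: card_le_not_lt (states_over_choice_card_ge neq_ab W2_no_repeat strat win chrom) (card _).
Qed.

Lemma W2_not_eps_chromatic_memory_lt (C : Type) (a b : C) :
  a <> b -> ~ has_eps_chromatic_memory_lt (@W2 C) C.
Proof.
move=> neq_ab mem.
have W_of_W2 u : W2 u -> W_eps (@W2 C) (Some \o u) by apply: W_eps_Some.
have [M [P [ES [s0 [delta [strat win chrom _ card]]]]]] :=
  mem _ _ _ _ (arena_cgraph (@Some C) neq_ab) (arena_has_winning_strategy neq_ab W_of_W2).
exact: card_le_not_lt (memory_card_ge (@W_eps_W2_no_initial_repeat C) strat win chrom) card.
Qed.

Theorem propositionB1 (C : Type) (a b : C) (hab : a <> b) :
  ~ has_chromatic_memory_lt (@W2 C) C /\ ~ has_eps_chromatic_memory_lt (@W2 C) C.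
Proof.
by split; [apply: W2_not_chromatic_memory_lt hab | apply: W2_not_eps_chromatic_memory_lt hab].
Qed.
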